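(* Let $X\in\mathbb{R}^T$ and let $F=\{[s_m,e_m]\}_{m=1}^M$ be a collection of intervals with $1\le s_m<e_m\le T$. The set of change-point candidates (with their side information) produced by the recursive call $\textsc{WBS}(1,T,0)$ coincides with the set $\mathcal P$ produced by the non-recursive procedure described in the context (ties assumed absent). Moreover, if $(m_k)_{k=1}^{\tilde N}$ is the order in which tuples enter $\mathcal P$ in the non-recursive procedure, then the sequence $(|\tilde X_{s_{m_k},e_{m_k}}^{b_{m_k}}|)_{k=1}^{\tilde N}$ is non-increasing.
   Context: For $1\le s\le b<e\le T$ and $n=e-s+1$, the CUSUM statistic is $\tilde X_{s,e}^b=\sqrt{\frac{e-b}{n(b-s+1)}}\sum_{t=s}^b X_t-\sqrt{\frac{b-s+1}{n(e-b)}}\sum_{t=b+1}^e X_t$. Recursive WBS with threshold $\zeta$, $\textsc{WBS}(s,e,\zeta)$: if $e-s<1$ stop; otherwise let $\mathcal M_{s,e}$ be the set of indices $m$ with $[s_m,e_m]\subseteq[s,e]$; let $(m_0,b_{m_0})=\arg\max_{m\in\mathcal M_{s,e},\ b\in\{s_m,\ldots,e_m-1\}}|\tilde X_{s_m,e_m}^b|$; if $|\tilde X_{s_{m_0},e_{m_0}}^{b_{m_0}}|\ge\zeta$, record $b_{m_0}$ with side information $(m_0,s_{m_0},e_{m_0},|\tilde X_{s_{m_0},e_{m_0}}^{b_{m_0}}|)$ and call $\textsc{WBS}(s,b_{m_0},\zeta)$ and $\textsc{WBS}(b_{m_0}+1,e,\zeta)$; otherwise stop. (If $\mathcal M_{s,e}=\emptyset$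 nothing is recorded.) Non-recursive procedure: for each $m$ let $b_m=\arg\max_{b\in\{s_m,\ldots,e_m-1\}}|\tilde X_{s_m,e_m}^b|$. Initialise $\mathcal C=\{(m,s_m,e_m,b_m,|\tilde X_{s_m,e_m}^{b_m}|):m=1,\ldots,M\}$, $\mathcal P=\emptyset$. While $\mathcal C\ne\emptyset$: let $m_0$ maximise $|\tilde X_{s_m,e_m}^{b_m}|$ over tuples in $\mathcal C$, add its tuple to $\mathcal P$, and remove from $\mathcal C$ all tuples with $s_m\le b_{m_0}<e_m$. *)

From Stdlib Require Import Reals Lra Lia Arith List Bool.
Import ListNotations.
Open Scope R_scope.

(* sum_{t=a}^{c} X t  (empty if c < a) *)
Definition sumX (X : nat -> R) (a c : nat) : R :=
  fold_right Rplus 0 (map X (seq a (S c - a))).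

Definition cusum (X : nat -> R) (s e b : nat) : R :=
  let n := INR (e - s + 1) in
  sqrt (INR (e - b) / (n * INR (b - s + 1))) * sumX X s b
  - sqrt (INR (b - s + 1) / (n * INR (e - b))) * sumX X (S b) e.

Definition acusum (X : nat -> R) (s e b : nat) : R := Rabs (cusum X s e b).

(* argmax of f over a list: the first element attaining the maximum
   (under the no-ties assumption this is THE argmax). *)
Definition argmax {A : Type} (f : A -> R) (l : list A) : option A :=
  fold_left (fun acc x =>
    match acc with
    | None => Some x
    | Some y => if Rlt_dec (f y) (f x) then Some x else Some y
    end) l None.

(* Side-information tuple (m, s_m, e_m, b, |X~_{s_m,e_m}^b|). *)
Definition tuple : Type := (nat * nat * nat * nat * R)%type.
Definition tval (x : tuple) : R := let '(_, _, _, _, v) := x in v.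
Definition tb (x : tuple) : nat := let '(_, _, _, b, _) := x in b.
Definition ts (x : tuple) : nat := let '(_, s, _, _, _) := x in s.
Definition te (x : tuple) : nat := let '(_, _, e, _, _) := x in e.

Section Procedures.
Variables (X : nat -> R) (M : nat) (s e : nat -> nat).
(* intervals are indexed by m = 1, ..., M, the m-th one being [s m, e m] *)

Definition mk_tuple (m b : nat) : tuple :=
  (m, s m, e m, b, acusum X (s m) (e m) b).

Definition cands (a c : nat) : list (nat * nat) :=
  flat_map (fun m =>
    if (a <=? s m)%nat && (e m <=? c)%nat
    then map (fun b => (m, b)) (seq (s m) (e m - s m))
    else []) (seq 1 M).

Fixpoint wbs_fuel (fuel : nat) (zeta : R) (a c : nat) : list tuple :=
  match fuel with
  | O => []
  | S f =>
    if (c <=? a)%nat then []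
    else match argmax (fun p => acusum X (s (fst p)) (e (fst p)) (snd p))
                      (cands a c) with
         | None => []
         | Some (m0, b0) =>
           if Rle_dec zeta (acusum X (s m0) (e m0) b0)
           then mk_tuple m0 b0 :: (wbs_fuel f zeta a b0 ++ wbs_fuel f zeta (S b0) c)
           else []
         end
  end.

(* the fuel e - s + 1 (length of the interval) is always sufficient *)
Definition WBS (a c : nat) (zeta : R) : list tuple :=
  wbs_fuel (c - a + 1) zeta a c.

Definition bm (m : nat) : nat :=
  match argmax (fun b => acusum X (s m) (e m) b) (seq (s m) (e m - s m)) with
  | Some b => b
  | None => s m
  end.

Definition C0 : list tuple := map (fun m => mk_tuple m (bm m)) (seq 1 M).

(* one loop iteration on C, returning the tuples in the order they enter P *)
Fixpoint nonrec_fuel (fuel : nat) (C : list tuple) : list tuple :=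
  match fuel with
  | O => []
  | S f =>
    match argmax tval C with
    | None => []
    | Some x0 =>
      x0 :: nonrec_fuel f
              (filter (fun x => negb ((ts x <=? tb x0)%nat && (tb x0 <? te x)%nat)) C)
    end
  end.

(* each iteration removes at least the selected tuple, so M iterations suffice *)
Definition NonRecP : list tuple := nonrec_fuel (length C0) C0.

End Procedures.

From Stdlib Require Import Reals List Lra Lia Bool.
Import ListNotations.
Open Scope R_scope.

(* The non-recursive procedure is a greedy selection: repeatedly take the
   tuple of largest value in the candidate list C and delete every tuple
   whose interval [ts, te) contains the selected change point.  We call
   "greedy C" this procedure run with enough fuel, and prove about it:
   - its output is non-increasing in value (each pick is a maximum of a
     list that contains all later picks);
   - for lists of valid tuples (ts <= tb < te) without ties, if C has the
     same elements as the union of two "separated" lists A and B (no tuple of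
     one kills a tuple of the other), then the picks on C are, as a set, the
     union of the picks on A and on B ([greedy_merge]).
   Let Cset a c be the tuples of C0 whose interval lies in [a, c].  The top
   tuple of Cset a c is exactly what WBS(a, c, 0) records, and its survivors
   split into the separated lists Cset a b0 and Cset (b0+1) c, on which WBS
   recurses.  By induction, WBS(a, c, 0) and greedy (Cset a c) have the same
   elements; for [a, c] = [1, T] we have Cset 1 T = C0, giving the theorem. *)

(* The folding step of [argmax], named so that its invariant can be stated. *)
Definition argmax_step {A : Type} (f : A -> R) (acc : option A) (x : A) : option A :=
  match acc with
  | None => Some x
  | Some y => if Rlt_dec (f y) (f x) then Some x else Some y
  end.

Lemma argmax_step_spec {A : Type} (f : A -> R) acc a :
  exists z, argmax_step f acc a = Some z /\ (z = a \/ acc = Some z) /\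
            forall y, (acc = Some y \/ y = a) -> f y <= f z.
Proof.
  destruct acc as [y|]; simpl.
  - destruct (Rlt_dec (f y) (f a)) as [Hlt|Hge].
    + exists a; split; [reflexivity|]; split; [now left|].
      intros y' [Hy' | ->]; [injection Hy' as <-; lra | lra].
    + exists y; split; [reflexivity|]; split; [now right|].
      intros y' [Hy' | ->]; [injection Hy' as <-; lra | lra].
  - exists a; split; [reflexivity|]; split; [now left|].
    intros y' [Hy' | ->]; [discriminate | lra].
Qed.

Lemma fold_argmax_spec {A : Type} (f : A -> R) (l : list A) : forall acc,
  match fold_left (argmax_step f) l acc with
  | None => acc = None /\ l = []
  | Some x => (acc = Some x \/ In x l) /\
              forall y, (acc = Some y \/ In y l) -> f y <= f x
  end.
Proof.
  induction l as [|a l IH]; intros acc; cbn [fold_left].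
  - destruct acc as [x|]; [|now split].
    split; [now left|]. intros y [Hy|[]]. injection Hy as ->. lra.
  - destruct (argmax_step_spec f acc a) as (z & Hz & Hzin & Hzmax).
    specialize (IH (argmax_step f acc a)). rewrite Hz in IH |- *.
    destruct (fold_left (argmax_step f) l (Some z)) as [x|]; [|now destruct IH].
    destruct IH as [Hxin Hxmax]. split.
    + simpl. destruct Hxin as [Hx|Hx]; [|auto].
      injection Hx as <-. destruct Hzin as [-> | ->]; auto.
    + intros y Hy.
      destruct Hy as [Hy|[<- | Hy]]; try (apply Hxmax; now right).
      all: apply Rle_trans with (f z); [apply Hzmax; tauto | apply Hxmax; now left].
Qed.

Lemma argmax_spec {A : Type} (f : A -> R) (l : list A) :
  match argmax f l with
  | None => l = []
  | Some x => In x l /\ forall y, In y l -> f y <= f x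
  end.
Proof.
  pose proof (fold_argmax_spec f l None) as H. unfold argmax. fold (argmax_step f).
  destruct (fold_left (argmax_step f) l None) as [x|]; [|tauto].
  destruct H as [[Hx|Hx] Hmax]; [discriminate|]. split; auto.
Qed.

Lemma argmax_unique {A : Type} (f : A -> R) (l : list A) x :
  (forall y z, In y l -> In z l -> f y = f z -> y = z) ->
  In x l -> (forall y, In y l -> f y <= f x) -> argmax f l = Some x.
Proof.
  intros Hinj Hx Hmax. pose proof (argmax_spec f l) as H.
  destruct (argmax f l) as [z|]; [|subst; contradiction].
  destruct H as [Hz Hzmax]. f_equal.
  apply Hinj; auto. apply Rle_antisym; auto.
Qed.

Definition kills (x0 x : tuple) : bool := ((ts x <=? tb x0) && (tb x0 <? te x))%nat.

Definition survivors (x0 : tuple) (C : list tuple) : list tuple :=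
  filter (fun x => negb (kills x0 x)) C.

Definition valid (x : tuple) : Prop := (ts x <= tb x < te x)%nat.

Definition wf (C : list tuple) : Prop :=
  (forall x, In x C -> valid x) /\
  (forall x y, In x C -> In y C -> tval x = tval y -> x = y).

Definition separated (A B : list tuple) : Prop :=
  forall a b, In a A -> In b B -> kills a b = false /\ kills b a = false.

Definition greedy (C : list tuple) : list tuple := nonrec_fuel (length C) C.

Lemma wf_incl C C' : incl C' C -> wf C -> wf C'.
Proof. intros Hincl [Hv Hi]; split; auto. Qed.

Lemma separated_sym A B : separated A B -> separated B A.
Proof. intros H b a Hb Ha. specialize (H a b Ha Hb). tauto. Qed.

Lemma nonrec_fuel_S f C : nonrec_fuel (S f) C =
  match argmax tval C with
  | None => []
  | Some x0 => x0 :: nonrec_fuel f (survivors x0 C)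
  end.
Proof. reflexivity. Qed.

Lemma nonrec_incl f : forall C, incl (nonrec_fuel f C) C.
Proof.
  induction f as [|f IH]; intros C x Hx; [contradiction|].
  rewrite nonrec_fuel_S in Hx. pose proof (argmax_spec tval C) as Hs.
  destruct (argmax tval C) as [x0|]; [|contradiction].
  destruct Hx as [<- | Hx]; [tauto|]. exact (incl_filter _ _ x (IH _ x Hx)).
Qed.

Lemma nonrec_sorted f : forall C k d, (S k < length (nonrec_fuel f C))%nat ->
  tval (nth (S k) (nonrec_fuel f C) d) <= tval (nth k (nonrec_fuel f C) d).
Proof.
  induction f as [|f IH]; intros C k d Hk; [simpl in Hk; lia|].
  rewrite nonrec_fuel_S in *. pose proof (argmax_spec tval C) as Hs.
  destruct (argmax tval C) as [x0|]; [destruct Hs as [_ Hmax] | simpl in Hk; lia].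
  destruct k as [|k]; simpl in Hk |- *; [|apply IH; lia].
  apply Hmax, (incl_filter (fun x => negb (kills x0 x)) C), (nonrec_incl f), nth_In.
  unfold survivors in Hk. lia.
Qed.

(* A valid pick kills itself, so each round strictly shrinks the list. *)
Lemma survivors_shorter x0 C : In x0 C -> valid x0 ->
  (length (survivors x0 C) < length C)%nat.
Proof.
  intros Hx0 [H1 H2].
  assert (Hself : negb (kills x0 x0) = false).
  { unfold kills. apply Nat.leb_le in H1. apply Nat.ltb_lt in H2. now rewrite H1, H2. }
  pose proof (filter_length_le (fun x => negb (kills x0 x)) C).
  unfold survivors. assert (length (filter (fun x => negb (kills x0 x)) C) <> length C); [|lia].
  intros Heq. apply filter_length_forallb in Heq.
  rewrite forallb_forall in Heq. rewrite Heq in Hself by exact Hx0. discriminate.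
Qed.

Lemma nonrec_fuel_irrelevant f : forall g C, (forall x, In x C -> valid x) ->
  (length C <= f)%nat -> (length C <= g)%nat -> nonrec_fuel f C = nonrec_fuel g C.
Proof.
  induction f as [|f IH]; intros g C Hv Hf Hg.
  - destruct C; [|simpl in Hf; lia]. now destruct g.
  - destruct g as [|g]; [destruct C; [reflexivity | simpl in Hg; lia]|].
    rewrite !nonrec_fuel_S. pose proof (argmax_spec tval C) as Hs.
    destruct (argmax tval C) as [x0|]; [|reflexivity].
    pose proof (survivors_shorter x0 C (proj1 Hs) (Hv x0 (proj1 Hs))).
    f_equal. apply IH; [|lia|lia].
    intros x Hx. apply Hv, (incl_filter _ C x Hx).
Qed.

Lemma greedy_step C x0 : (forall x, In x C -> valid x) ->
  argmax tval C = Some x0 -> greedy C = x0 :: greedy (survivors x0 C).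
Proof.
  intros Hv Harg. pose proof (argmax_spec tval C) as Hs. rewrite Harg in Hs.
  pose proof (survivors_shorter x0 C (proj1 Hs) (Hv x0 (proj1 Hs))) as Hlt.
  unfold greedy at 1. destruct C as [|c C']; [destruct Hs as [[] _]|].
  simpl length. rewrite nonrec_fuel_S, Harg. f_equal.
  apply nonrec_fuel_irrelevant; [|cbn [length] in Hlt; lia|lia].
  intros x Hx. apply Hv, (incl_filter _ _ x Hx).
Qed.

Lemma greedy_merge n : forall C A B, (length C <= n)%nat -> wf C ->
  (forall x, In x C <-> In x A \/ In x B) -> separated A B ->
  forall x, In x (greedy C) <-> In x (greedy A) \/ In x (greedy B).
Proof.
  induction n as [|n IH]; intros C A B Hlen HC Hsplit Hsep.
  - destruct C; [|simpl in Hlen; lia].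
    destruct A as [|a A]; [|exfalso; apply (proj2 (Hsplit a)); now left; left].
    destruct B as [|b B]; [|exfalso; apply (proj2 (Hsplit b)); now right; left].
    simpl; tauto.
  - pose proof (argmax_spec tval C) as Hs.
    destruct (argmax tval C) as [x0|] eqn:Harg.
    (* no pick at all: C is empty, which the smaller bound already covers *)
    2:{ apply IH; [subst; simpl; lia | assumption..]. }
    destruct Hs as [Hx0 Hmax].
    (* The first pick on C is the first pick on whichever list contains it;
       the other list is untouched by that pick. *)
    assert (Hcase : forall A B, (forall x, In x C <-> In x A \/ In x B) ->
              separated A B -> In x0 A ->
              forall x, In x (greedy C) <-> In x (greedy A) \/ In x (greedy B)).
    { clear A B Hsplit Hsep. intros A B Hsplit Hsep HA x.
      assert (HAC : incl A C) by (intros y Hy; apply Hsplit; now left).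
      assert (HargA : argmax tval A = Some x0).
      { apply argmax_unique; auto.
        intros y z Hy Hz; apply (proj2 HC); auto. }
      rewrite (greedy_step C x0 (proj1 HC) Harg).
      rewrite (greedy_step A x0 (fun y Hy => proj1 HC y (HAC y Hy)) HargA).
      simpl. rewrite (IH (survivors x0 C) (survivors x0 A) B); [tauto| | | |].
      + pose proof (survivors_shorter x0 C Hx0 (proj1 HC x0 Hx0)). lia.
      + exact (wf_incl C _ (incl_filter _ _) HC).
      + intros y. unfold survivors. rewrite !filter_In, Hsplit.
        split; [intros [[Hy|Hy] Hk]; auto|].
        intros [[Hy Hk]|Hy]; [auto|]. split; [now right|].
        now rewrite (proj1 (Hsep x0 y HA Hy)).
      + intros a b Ha Hb. apply Hsep; [apply (incl_filter _ _ a Ha) | exact Hb]. }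
    apply Hsplit in Hx0 as [HA|HB]; [now apply Hcase|].
    intros x. rewrite or_comm. apply Hcase; auto using separated_sym.
    intros y. rewrite Hsplit. tauto.
Qed.

Section WBSvsGreedy.
Variables (X : nat -> R) (M : nat) (s e : nat -> nat).
Hypothesis Hse : forall m, (1 <= m <= M)%nat -> (s m < e m)%nat.
Hypothesis Hnoties : forall m1 b1 m2 b2,
  (1 <= m1 <= M)%nat -> (s m1 <= b1 < e m1)%nat ->
  (1 <= m2 <= M)%nat -> (s m2 <= b2 < e m2)%nat ->
  (m1, b1) <> (m2, b2) ->
  acusum X (s m1) (e m1) b1 <> acusum X (s m2) (e m2) b2.

Definition score (p : nat * nat) : R := acusum X (s (fst p)) (e (fst p)) (snd p).

Lemma bm_spec m : (1 <= m <= M)%nat ->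
  (s m <= bm X s e m < e m)%nat /\
  forall b, (s m <= b < e m)%nat -> score (m, b) <= score (m, bm X s e m).
Proof.
  intros Hm. pose proof (Hse m Hm) as Hlt. unfold bm.
  pose proof (argmax_spec (fun b => acusum X (s m) (e m) b) (seq (s m) (e m - s m))) as Hs.
  destruct (argmax _ _) as [b|].
  - destruct Hs as [Hb Hmax]. apply in_seq in Hb. split; [lia|].
    intros b' Hb'. apply Hmax, in_seq. simpl. lia.
  - apply (f_equal (@length nat)) in Hs. rewrite length_seq in Hs. simpl in Hs. lia.
Qed.

Lemma cands_in a c m b : In (m, b) (cands M s e a c) <->
  (1 <= m <= M)%nat /\ (a <= s m)%nat /\ (e m <= c)%nat /\ (s m <= b < e m)%nat.
Proof.
  unfold cands. rewrite in_flat_map. split.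
  - intros [m' [Hm' Hin]]. apply in_seq in Hm'.
    destruct (Nat.leb_spec a (s m')), (Nat.leb_spec (e m') c);
      simpl in Hin; try contradiction.
    apply in_map_iff in Hin as [b' [Heq Hb']]. injection Heq as -> ->.
    apply in_seq in Hb'. lia.
  - intros (Hm & Ha & Hc & Hb). exists m. split; [apply in_seq; lia|].
    destruct (Nat.leb_spec a (s m)), (Nat.leb_spec (e m) c); try lia.
    apply in_map_iff. exists b. split; [reflexivity | apply in_seq; lia].
Qed.

Lemma C0_in x : In x (C0 X M s e) <->
  exists m, (1 <= m <= M)%nat /\ x = mk_tuple X s e m (bm X s e m).
Proof.
  unfold C0. rewrite in_map_iff. split.
  - intros [m [<- Hm]]. apply in_seq in Hm. exists m. split; [lia | reflexivity].
  - intros [m [Hm ->]]. exists m. split; [reflexivity | apply in_seq; lia].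
Qed.

(* The initial candidate list is well formed: this is where "no ties" is used. *)
Lemma C0_wf : wf (C0 X M s e).
Proof.
  split.
  - intros x Hx. apply C0_in in Hx as [m [Hm ->]].
    apply bm_spec in Hm. unfold valid; simpl. lia.
  - intros x y Hx Hy Hval.
    apply C0_in in Hx as [m1 [Hm1 ->]]. apply C0_in in Hy as [m2 [Hm2 ->]].
    destruct (Nat.eq_dec m1 m2) as [->|Hne]; [reflexivity|]. exfalso.
    apply (Hnoties m1 (bm X s e m1) m2 (bm X s e m2)); try apply bm_spec; auto.
    intros Heq. injection Heq as Heq _. contradiction.
Qed.

Definition Cset (a c : nat) : list tuple :=
  filter (fun x => ((a <=? ts x) && (te x <=? c))%nat) (C0 X M s e).

Lemma Cset_in a c x : In x (Cset a c) <->
  In x (C0 X M s e) /\ (a <= ts x)%nat /\ (te x <= c)%nat.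
Proof.
  unfold Cset. rewrite filter_In, andb_true_iff, Nat.leb_le, Nat.leb_le. reflexivity.
Qed.

Lemma Cset_wf a c : wf (Cset a c).
Proof. apply (wf_incl _ _ (incl_filter _ _) C0_wf). Qed.

Lemma Cset_nil a c :
  (forall m, (1 <= m <= M)%nat -> (a <= s m)%nat -> (e m <= c)%nat -> False) ->
  Cset a c = [].
Proof.
  intros Hnone. destruct (Cset a c) as [|y l] eqn:E; [reflexivity|]. exfalso.
  assert (Hy : In y (Cset a c)) by (rewrite E; now left).
  apply Cset_in in Hy as [Hy [Ha Hc]]. apply C0_in in Hy as [m [Hm ->]].
  exact (Hnone m Hm Ha Hc).
Qed.

Lemma Cset_full a c : (forall m, (1 <= m <= M)%nat -> (a <= s m)%nat /\ (e m <= c)%nat) ->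
  Cset a c = C0 X M s e.
Proof.
  intros Hall. apply forallb_filter_id, forallb_forall. intros x Hx.
  apply C0_in in Hx as [m [Hm ->]]. apply andb_true_iff. simpl.
  rewrite !Nat.leb_le. apply Hall, Hm.
Qed.

Lemma Cset_cut a b c x0 : tb x0 = b -> (a <= b <= c)%nat ->
  forall y, In y (survivors x0 (Cset a c)) <-> In y (Cset a b) \/ In y (Cset (S b) c).
Proof.
  intros Hb Habc y. unfold survivors. rewrite filter_In, !Cset_in.
  unfold kills. rewrite Hb, negb_true_iff, andb_false_iff, Nat.leb_gt, Nat.ltb_ge.
  split.
  - intros [[Hy [Ha Hc]] Hk].
    pose proof (proj1 C0_wf y Hy) as Hv; unfold valid in Hv.
    destruct Hk; [right | left]; repeat split; auto; lia.
  - intros [[Hy [Ha Hc]] | [Hy [Ha Hc]]];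
      pose proof (proj1 C0_wf y Hy) as Hv; unfold valid in Hv;
      repeat split; auto; lia.
Qed.

Lemma Cset_separated a b c : separated (Cset a b) (Cset (S b) c).
Proof.
  intros u v Hu Hv. apply Cset_in in Hu as [Hu [_ Hub]]. apply Cset_in in Hv as [Hv [Hvb _]].
  pose proof (proj1 C0_wf u Hu) as Vu. pose proof (proj1 C0_wf v Hv) as Vv.
  unfold valid in Vu, Vv. unfold kills.
  rewrite !andb_false_iff, !Nat.leb_gt, !Nat.ltb_ge. split; [left | right]; lia.
Qed.

Lemma top_candidate a c m0 b0 : argmax score (cands M s e a c) = Some (m0, b0) ->
  (a <= s m0)%nat /\ (e m0 <= c)%nat /\ (s m0 <= b0 < e m0)%nat /\
  argmax tval (Cset a c) = Some (mk_tuple X s e m0 b0).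
Proof.
  intros Harg. pose proof (argmax_spec score (cands M s e a c)) as Hs.
  rewrite Harg in Hs. destruct Hs as [Hin Hmax].
  apply cands_in in Hin as (Hm0 & Ha0 & Hc0 & Hb0range).
  assert (Hbest : forall m, (1 <= m <= M)%nat -> (a <= s m)%nat -> (e m <= c)%nat ->
                  score (m, bm X s e m) <= score (m0, b0)).
  { intros m Hm Ha Hc. apply Hmax, cands_in. pose proof (bm_spec m Hm). lia. }
  assert (Hb0 : b0 = bm X s e m0).
  { destruct (bm_spec m0 Hm0) as [Hbm Hbm_max].
    destruct (Nat.eq_dec b0 (bm X s e m0)) as [|Hne]; [assumption|]. exfalso.
    apply (Hnoties m0 b0 m0 (bm X s e m0)); auto.
    - intros Heq. injection Heq as Heq. contradiction.
    - apply Rle_antisym; [apply Hbm_max; lia | apply Hbest; auto]. }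
  repeat split; auto; try lia.
  apply argmax_unique; [apply Cset_wf | |].
  - apply Cset_in. split; [apply C0_in; exists m0; subst; auto | simpl; lia].
  - intros y Hy. apply Cset_in in Hy as [Hy [Ha Hc]].
    apply C0_in in Hy as [m [Hm ->]]. apply Hbest; auto.
Qed.

Lemma wbs_greedy fuel : forall a c, (c - a + 1 <= fuel)%nat ->
  forall x, In x (wbs_fuel X M s e fuel 0 a c) <-> In x (greedy (Cset a c)).
Proof.
  induction fuel as [|fuel IH]; intros a c Hfuel x; [lia|].
  cbn [wbs_fuel].
  destruct (Nat.leb_spec c a) as [Hca|Hca].
  { rewrite Cset_nil; [simpl; tauto|]. intros m Hm Ha Hc. pose proof (Hse m Hm). lia. }
  destruct (argmax _ (cands M s e a c)) as [[m0 b0]|] eqn:Harg.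
  2:{ rewrite Cset_nil; [simpl; tauto|]. intros m Hm Ha Hc.
      pose proof (argmax_spec score (cands M s e a c)) as Hs. unfold score in Hs.
      rewrite Harg in Hs. assert (Hcand : In (m, bm X s e m) (cands M s e a c)).
      { apply cands_in. pose proof (bm_spec m Hm). lia. }
      rewrite Hs in Hcand. contradiction. }
  destruct (top_candidate a c m0 b0 Harg) as (Ha0 & Hc0 & Hb0 & Htop).
  destruct (Rle_dec 0 _) as [_|Hneg]; [|exfalso; apply Hneg, Rabs_pos].
  rewrite (greedy_step _ _ (proj1 (Cset_wf a c)) Htop). simpl.
  rewrite in_app_iff, (IH a b0), (IH (S b0) c) by lia.
  set (x0 := mk_tuple X s e m0 b0).
  rewrite (greedy_merge _ (survivors x0 (Cset a c)) (Cset a b0) (Cset (S b0) c) (le_n _)).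
  - tauto.
  - exact (wf_incl _ _ (incl_filter _ _) (Cset_wf a c)).
  - apply Cset_cut; [reflexivity | lia].
  - apply Cset_separated.
Qed.

End WBSvsGreedy.

Theorem mainTheorem8 (T M : nat) (X : nat -> R) (s e : nat -> nat)
  (Hint : forall m, (1 <= m <= M)%nat -> (1 <= s m /\ s m < e m /\ e m <= T)%nat)
  (Hnoties : forall m1 b1 m2 b2,
      (1 <= m1 <= M)%nat -> (s m1 <= b1 < e m1)%nat ->
      (1 <= m2 <= M)%nat -> (s m2 <= b2 < e m2)%nat ->
      (m1, b1) <> (m2, b2) ->
      acusum X (s m1) (e m1) b1 <> acusum X (s m2) (e m2) b2) :
  (forall x : tuple, In x (WBS X M s e 1 T 0) <-> In x (NonRecP X M s e))
  /\ (forall (k : nat) (d : tuple), (S k < length (NonRecP X M s e))%nat ->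
        tval (nth (S k) (NonRecP X M s e) d) <= tval (nth k (NonRecP X M s e) d)).
Proof.
  assert (Hse : forall m, (1 <= m <= M)%nat -> (s m < e m)%nat)
    by (intros m Hm; apply Hint in Hm; lia).
  split.
  - (* WBS(1, T, 0) covers all intervals, so it matches greedy on Cset 1 T = C0 *)
    intros x. unfold WBS. rewrite (wbs_greedy X M s e Hse Hnoties) by lia.
    rewrite Cset_full; [reflexivity|].
    intros m Hm. apply Hint in Hm. lia.
  - intros k d Hk. apply nonrec_sorted, Hk.
Qed.
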